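(* Let $T$ be a positive integer, $f:\mathbb{R}^{T}\to\mathbb{R}$ differentiable with $\mathrm{prog}(\nabla f(x))\le\mathrm{prog}(x)+1$ for all $x$, $0<\tau_1\le\dots\le\tau_n$, $p\in(0,1]$, and let the oracle be $O=O^G_{\tau_1,\dots,\tau_n}$ with $\mathcal{D}=\mathrm{Bernoulli}(p)^{\otimes n}$ and $$[G(x;\xi)]_j=\nabla_jf(x)\Big(1+\mathbb{1}[j>\mathrm{prog}(x)]\Big(\frac\xi p-1\Big)\Big),\quad \xi\in\{0,1\},\ j\in[T].$$ Let $A$ be a zero-respecting algorithm run in the time oracle protocol with this oracle. Then for every $\delta\in(0,1]$ and every $t\ge0$ with $$t\le\frac12\min_{m\in[n]}\tau_m\Big(1+\frac1{4pm}\Big)\Big(\frac T2+\log\delta\Big),$$ with probability at least $1-\delta$ we have $\mathrm{prog}(x^k)<T$ for all $k\in S_t$.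
   Context: $\mathrm{prog}(x)=\max\{i\ge0:x_i\ne0\}$ with convention $x_0\equiv1$; $\mathrm{supp}(x)=\{i:x_i\ne0\}$; $\mathbb{N}_0=\{0,1,\dots\}$. Time oracle protocol (single oracle). An algorithm is $A^0\in\mathbb{R}_{\ge0}\times\mathbb{R}^d$ and $A^k:(\mathbb{R}^d)^k\to\mathbb{R}_{\ge0}\times\mathbb{R}^d$ ($k\ge1$) such that the first (time) component of $A^k(g^1,\dots,g^k)$ is at least that of $A^{k-1}(g^1,\dots,g^{k-1})$. Set $t^0=0$ and oracle state $s^0=(0,0,0)\in\mathbb{R}_{\ge0}\times\mathbb{R}^d\times\{0,1\}$. For $k=0,1,\dots$: $(t^{k+1},x^k)=A^k(g^1,\dots,g^k)$; draw $\xi^{k+1}=(\xi^{k+1}_1,\dots,\xi^{k+1}_n)\sim\mathcal{D}$ independently of the past; $(s^{k+1},g^{k+1})=O(t^{k+1},x^k,s^k,\xi^{k+1})$. $S_t=\{k\in\mathbb{N}_0:t^k\le t\}$. Zero-respecting: $\mathrm{supp}(x^k)\subseteq\bigcup_{j=1}^k\mathrm{supp}(g^j)$ for all $k$ and all realizations. Synchronized oracle: for a mapping $G$, $O^G_{\tau_1,\dots,\tau_n}(t,x,(s_t,s_x,s_q),(\xi_1,\dots,\xi_n))$ returns $((t,x,1),0)$ if $s_q=0$, and if $s_q=1$ returns $\big((0,0,0),\sum_{i\in[n]:\,s_t+\tau_i\le t}G(s_x;\xi_i)\big)$ (empty sum $=0$). *)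

From HB Require Import structures.
From mathcomp Require Import all_boot all_order all_algebra.
From mathcomp Require Import all_classical all_reals all_analysis.
Set Implicit Arguments. Unset Strict Implicit. Unset Printing Implicit Defensive.
Import Order.TTheory GRing.Theory Num.Theory.
Import numFieldNormedType.Exports.
Local Open Scope classical_set_scope.
Local Open Scope ring_scope.

Section Defs.
Variables (R : realType) (T n : nat).

(* Vectors of R^T are row vectors 'rV[R]_T; the paper's coordinate j in [T]
   (1-based) is the entry with 0-based index j-1. *)

(* prog(x) = max{ i >= 0 : x_i <> 0 } with x_0 = 1, i.e. the largest 1-based
   index of a nonzero coordinate, or 0 if x = 0. *)
Definition prog (x : 'rV[R]_T) : nat :=
  \max_(j < T | x 0 j != 0) j.+1.

Definition supp (x : 'rV[R]_T) : set 'I_T := [set j | x 0 j != 0].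

Definition grad (f : 'rV[R]_T -> R) (x : 'rV[R]_T) : 'rV[R]_T :=
  \row_j ('D_(delta_mx 0 j) f x).

Definition Gmap (f : 'rV[R]_T -> R) (p : R) (x : 'rV[R]_T) (xi : bool)
  : 'rV[R]_T :=
  \row_j ((grad f x) 0 j *
     (1 + (if (prog x < j.+1)%N then (xi%:R / p - 1) else 0))).

Definition ostate := (R * 'rV[R]_T * bool)%type.

Definition sync_oracle (G : 'rV[R]_T -> bool -> 'rV[R]_T) (tau : 'I_n -> R)
  (t : R) (x : 'rV[R]_T) (s : ostate) (xi : 'I_n -> bool)
  : ostate * 'rV[R]_T :=
  let: (st, sx, sq) := s in
  if ~~ sq then ((t, x, true), 0)
  else ((0, 0, false), \sum_(i < n | st + tau i <= t) G sx (xi i)).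

(* An algorithm: A^k(g^1,...,g^k) = A [:: g^1; ...; g^k]
   (only its values on sequences are used; A^k is A on sequences of size k). *)
Definition algorithm := seq 'rV[R]_T -> R * 'rV[R]_T.

Definition valid_algorithm (A : algorithm) : Prop :=
  (forall s, 0 <= (A s).1) /\
  (forall s g, (A s).1 <= (A (rcons s g)).1).

(* The run of the time oracle protocol for a given realization of the noise:
   noise k = xi^{k+1}.  history k = ([:: g^1; ...; g^k], s^k). *)
Fixpoint history (O : R -> 'rV[R]_T -> ostate -> ('I_n -> bool) ->
                      ostate * 'rV[R]_T)
   (A : algorithm) (noise : nat -> 'I_n -> bool) (k : nat)
   : seq 'rV[R]_T * ostate :=
  match k with
  | 0 => ([::], (0, 0, false))
  | k'.+1 =>
      let: (gs, s) := history O A noise k' in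
      let: (tk, xk) := A gs in
      let: (s', g) := O tk xk s (noise k') in
      (rcons gs g, s')
  end.

Definition grads O A noise k := (history O A noise k).1.
Definition iterate O A noise k : 'rV[R]_T := (A (grads O A noise k)).2.
(* t^k, with t^0 = 0 and (t^{k+1}, x^k) = A^k(...) *)
Definition time O A noise k : R :=
  if k is k'.+1 then (A (grads O A noise k')).1 else 0.

Definition zero_respecting O (A : algorithm) : Prop :=
  forall (noise : nat -> 'I_n -> bool) (k : nat),
    supp (iterate O A noise k) `<=`
    \bigcup_(g in [set g | g \in grads O A noise k]) supp g.

End Defs.

(* xi : Omega -> nat -> 'I_n -> bool, with xi w k = xi^{k+1}(w), is a sequence
   of i.i.d. random vectors with law Bernoulli(p)^{(x) n}: every coordinate is
   a (measurable) random variable, and the joint law of (xi^1,...,xi^K) is the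
   product Bernoulli law, for every K. *)
Definition iid_bernoulli_noise {R : realType} {d : measure_display}
  {Omega : measurableType d} (P : probability Omega R) (n : nat) (p : R)
  (xi : Omega -> nat -> 'I_n -> bool) : Prop :=
  (forall k i, measurable [set w | xi w k i]) /\
  (forall (K : nat) (b : nat -> 'I_n -> bool),
     P [set w | forall k i, (k < K)%N -> xi w k i = b k i] =
     (\prod_(k < K) \prod_(i < n) (if b k i then p else 1 - p))%:E).

From HB Require Import structures.
From mathcomp Require Import all_boot all_order all_algebra.
From mathcomp Require Import all_classical all_reals all_analysis.
From mathcomp Require Import ring lra zify.
Set Implicit Arguments. Unset Strict Implicit. Unset Printing Implicit Defensive.
Import Order.TTheory GRing.Theory Num.Theory.
Import numFieldNormedType.Exports.
Local Open Scope classical_set_scope.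
Local Open Scope ring_scope.

(* Let pi_k be the largest progress among the gradients
   received before round k.  By the progress hypothesis on f, a round can
   raise pi by one only if some worker that finished in time drew xi = 1
   (the unseen coordinate is multiplied by xi / p), and a zero-respecting
   algorithm satisfies prog(x^k) <= pi_k.  Hence the potential
       Phi_k = exp(beta * pi_k - L * t^k)
   is a supermartingale as soon as every worker i pays with its delay for
   its expected gain: (e^beta - 1) min(1, p (i+1)) <= L tau_i.  Stopping Phi
   at the value 1/delta at the first round with t^k <= t and prog(x^k) >= T,
   which is possible when -ln delta <= beta T - L t, keeps it a
   supermartingale starting at 1, so by Markov the first N rounds are bad
   with probability at most delta, and then for all N by continuity from
   below. *)

Section ProgressIndex.
Variables (R : realType) (T : nat).

Lemma prog_leP (v : 'rV[R]_T) m :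
  reflect (forall j : 'I_T, v 0 j != 0 -> (j.+1 <= m)%N) (prog v <= m)%N.
Proof. exact: bigmax_leqP. Qed.

Lemma prog_le_zeroP (v : 'rV[R]_T) m :
  reflect (forall j : 'I_T, (m < j.+1)%N -> v 0 j = 0) (prog v <= m)%N.
Proof.
apply: (iffP (prog_leP _ _)) => vP j.
  by move=> ltmj; apply/eqP; apply: contraTT ltmj => /vP; rewrite -leqNgt.
by move=> vj0; rewrite leqNgt; apply: contra vj0 => /vP ->.
Qed.

Lemma prog_ge (v : 'rV[R]_T) (j : 'I_T) : v 0 j != 0 -> (j.+1 <= prog v)%N.
Proof. exact: (elimT (prog_leP v (prog v)) (leqnn _)). Qed.

Lemma prog0 : prog (0 : 'rV[R]_T) = 0%N.
Proof. by apply/eqP; rewrite -leqn0; apply/prog_le_zeroP => j _; rewrite mxE. Qed.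

End ProgressIndex.

(* A sum of stochastic gradients queried at x reaches at most one coordinate
   beyond prog x, and it does so only if one of the summed draws equals 1:
   the unseen coordinate prog x + 1 is multiplied by xi / p. *)
Lemma prog_sum_Gmap (R : realType) (T n : nat) (f : 'rV[R]_T -> R) (p : R)
    (x : 'rV[R]_T) (S : pred 'I_n) (b : 'I_n -> bool) :
  (prog (grad f x) <= (prog x).+1)%N ->
  (prog (\sum_(i < n | S i) Gmap f p x (b i)) <=
    prog x + [exists i, S i && b i])%N.
Proof.
move=> hgrad; apply/prog_le_zeroP => j ltj; rewrite summxE; apply: big1 => i Si.
rewrite mxE; have [lej|] := leqP j.+1 (prog x).+1; last first.
  by move=> ltj'; rewrite (elimT (prog_le_zeroP _ _) hgrad j ltj') mul0r.
case: existsP ltj => [[i0 _]|none] ltj; first by lia.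
have -> : b i = false by apply/negP => bi; apply: none; exists i; rewrite Si.
have -> : j.+1 = (prog x).+1 by lia.
by rewrite ltnSn mul0r sub0r addrN mulr0.
Qed.

Section Protocol.
Variables (R : realType) (T n : nat).
Variable O : R -> 'rV[R]_T -> ostate R T -> ('I_n -> bool) ->
             ostate R T * 'rV[R]_T.
Variable A : algorithm R T.

Definition agree_upto (nu nu' : nat -> 'I_n -> bool) (k : nat) :=
  forall j i, (j < k)%N -> nu j i = nu' j i.

Lemma agree_uptoW nu nu' k k' :
  (k' <= k)%N -> agree_upto nu nu' k -> agree_upto nu nu' k'.
Proof. by move=> lek' agr j i ltj; apply: agr; apply: leq_trans lek'. Qed.

Lemma history_agree nu nu' k :
  agree_upto nu nu' k -> history O A nu k = history O A nu' k.
Proof.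
elim: k => [//|k IH] agr /=.
rewrite IH; last exact: agree_uptoW agr.
by have -> : nu k = nu' k by apply/funext => i; apply: agr.
Qed.

Lemma grads_agree nu nu' k :
  agree_upto nu nu' k -> grads O A nu k = grads O A nu' k.
Proof. by move=> /history_agree; rewrite /grads => ->. Qed.

Lemma time_agree nu nu' k :
  agree_upto nu nu' k -> time O A nu k.+1 = time O A nu' k.+1.
Proof. by move=> /grads_agree; rewrite /time => ->. Qed.

Lemma iterate_agree nu nu' k :
  agree_upto nu nu' k -> iterate O A nu k = iterate O A nu' k.
Proof. by move=> /grads_agree; rewrite /iterate => ->. Qed.

Lemma history_step nu k :
  let: (gs, s) := history O A nu k in
  history O A nu k.+1 =
    (rcons gs (O (A gs).1 (A gs).2 s (nu k)).2,
     (O (A gs).1 (A gs).2 s (nu k)).1).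
Proof.
rewrite /=; case: (history O A nu k) => gs s.
by case: (A gs) => tk xk /=; case: (O tk xk s (nu k)).
Qed.

Lemma grads_step nu k :
  grads O A nu k.+1 = rcons (grads O A nu k)
    (O (time O A nu k.+1) (iterate O A nu k) (history O A nu k).2 (nu k)).2.
Proof.
rewrite /time /iterate /grads; move: (history_step nu k).
by case: (history O A nu k) => gs s ->.
Qed.

Lemma state_step nu k :
  (history O A nu k.+1).2 =
    (O (time O A nu k.+1) (iterate O A nu k) (history O A nu k).2 (nu k)).1.
Proof.
rewrite /time /iterate /grads; move: (history_step nu k).
by case: (history O A nu k) => gs s ->.
Qed.

Hypothesis hA : valid_algorithm A.

Lemma time_mono nu k : time O A nu k <= time O A nu k.+1.
Proof.
case: hA => h0 h1; case: k => [|k]; first exact: h0.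
by rewrite /time grads_step; apply: h1.
Qed.

End Protocol.

Section BernoulliDraw.
Variables (R : realType) (n : nat) (p : R).
Hypotheses (hp0 : 0 <= p) (hp1 : p <= 1).
Local Notation V := {ffun 'I_n -> bool}.

Definition draw_weight (v : V) : R :=
  \prod_(i < n) (if v i then p else 1 - p).

Lemma draw_weight_ge0 v : 0 <= draw_weight v.
Proof. by apply: prodr_ge0 => i _; case: (v i); rewrite ?subr_ge0. Qed.

Lemma sum_draws_prod (c : 'I_n -> bool -> R) :
  \sum_(v : V) \prod_i c i (v i) = \prod_i (c i true + c i false).
Proof. by rewrite -bigA_distr_bigA; apply: eq_bigr => i _; rewrite big_bool. Qed.

Lemma sum_draw_weight : \sum_v draw_weight v = 1.
Proof.
rewrite (sum_draws_prod (fun _ b => if b then p else 1 - p)).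
by apply: big1 => i _; rewrite addrC subrK.
Qed.

Lemma mean_draw_coord (i0 : 'I_n) : \sum_v draw_weight v * (v i0)%:R = p.
Proof.
pose c i (b : bool) := (if b then p else 1 - p) * (if i == i0 then b%:R else 1).
transitivity (\sum_(v : V) \prod_i c i (v i)).
  apply: eq_bigr => v _; rewrite big_split /=; congr (_ * _).
  by rewrite (bigD1 i0) //= eqxx big1 ?mulr1 // => i /negbTE ->.
rewrite sum_draws_prod (bigD1 i0) //= /c eqxx mulr1 mulr0 addr0 big1 ?mulr1 //.
by move=> i /negbTE ->; rewrite !mulr1 addrC subrK.
Qed.

(* Union bound: some coordinate of S draws 1 with probability at most
   min(1, |S| p). *)
Lemma prob_some_draw (S : pred 'I_n) :
  \sum_v draw_weight v * [exists i, S i && v i]%:R <=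
  Num.min 1 (\sum_(i | S i) p).
Proof.
rewrite le_min; apply/andP; split.
  apply: (@le_trans _ _ (\sum_v draw_weight v)); last by rewrite sum_draw_weight.
  apply: ler_sum => v _.
  by case: [exists i, S i && v i]; rewrite ?mulr1 ?mulr0 ?draw_weight_ge0.
apply: (@le_trans _ _ (\sum_v draw_weight v * \sum_(i | S i) (v i)%:R)).
  apply: ler_sum => v _; rewrite ler_wpM2l ?draw_weight_ge0 //.
  case: existsP => [[i /andP [Si vi]]|_]; last by rewrite sumr_ge0.
  by rewrite (bigD1 i) //= vi lerDl sumr_ge0.
under eq_bigr do rewrite mulr_sumr.
by rewrite exchange_big /=; apply: ler_sum => i _; rewrite mean_draw_coord.
Qed.

End BernoulliDraw.

Section DrawSequences.
Variables (R : realType) (n : nat) (p : R).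
Hypotheses (hp0 : 0 <= p) (hp1 : p <= 1).
Local Notation V := {ffun 'I_n -> bool}.

Fixpoint draw_seqs (N : nat) : seq (seq V) :=
  if N is N'.+1 then [seq rcons h v | h <- draw_seqs N', v <- enum V]
  else [:: [::]].

Definition seq_weight (h : seq V) : R := \prod_(v <- h) draw_weight p v.

Definition expect (N : nat) (F : seq V -> R) : R :=
  \sum_(h <- draw_seqs N) seq_weight h * F h.

Lemma seq_weight_ge0 h : 0 <= seq_weight h.
Proof. by apply: prodr_ge0 => v _; apply: draw_weight_ge0. Qed.

Lemma expectS N F :
  expect N.+1 F = expect N (fun h => \sum_v draw_weight p v * F (rcons h v)).
Proof.
rewrite /expect /= big_allpairs_dep /=; apply: eq_bigr => h _.
rewrite mulr_sumr big_enum /=; apply: eq_bigr => v _.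
by rewrite /seq_weight big_rcons /= mulrA.
Qed.

Lemma ler_expect N F G : (forall h, F h <= G h) -> expect N F <= expect N G.
Proof.
by move=> FG; apply: ler_sum => h _; rewrite ler_wpM2l ?seq_weight_ge0.
Qed.

Lemma expectZ N c F : expect N (fun h => c * F h) = c * expect N F.
Proof. by rewrite /expect mulr_sumr; apply: eq_bigr => h _; rewrite mulrCA. Qed.

Lemma size_draw_seqs N h : h \in draw_seqs N -> size h = N.
Proof.
elim: N h => [|N IH] h /=; first by rewrite inE => /eqP ->.
by case/allpairsPdep => h' [v [/IH h'N _ ->]]; rewrite size_rcons h'N.
Qed.

Lemma mem_draw_seqs h : h \in draw_seqs (size h).
Proof.
elim/last_ind: h => [|h v IH]; first by rewrite inE.
by rewrite size_rcons; apply/allpairsPdep; exists h, v; rewrite mem_enum.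
Qed.

End DrawSequences.

Lemma measure_bigsetU_seq_le (d : measure_display) (X : measurableType d)
    (R : realType) (mu : {measure set X -> \bar R}) (I : Type) (s : seq I)
    (B : pred I) (F : I -> set X) :
  (forall i, measurable (F i)) ->
  (mu (\big[setU/set0]_(i <- s | B i) F i) <= \sum_(i <- s | B i) mu (F i))%E.
Proof.
move=> mF; elim: s => [|i s IH]; first by rewrite !big_nil measure0.
rewrite !big_cons; case: ifP => // _.
apply: le_trans (measureU2 _ _ _) _; first exact: mF.
  by apply: bigsetU_measurable => j _; exact: mF.
exact: leeD2l.
Qed.

(* If in a round
   only the workers of S finish, each within time D, then the expected gain
   a * min(1, |S| p) is paid for by L D: it suffices to charge the slowest
   index of S, since S has at most that many elements. *)
Lemma round_gain_le (R : realType) (n : nat) (tau : 'I_n -> R) (p a L D : R)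
    (S : pred 'I_n) :
  0 <= p -> 0 <= a -> 0 <= L -> 0 <= D ->
  (forall i : 'I_n, a * Num.min 1 (p * (i.+1)%:R) <= L * tau i) ->
  (forall i, S i -> tau i <= D) ->
  a * Num.min 1 (\sum_(i | S i) p) <= L * D.
Proof.
move=> hp ha hL hD hprice hS.
have [i0 Si0|none] := pickP S; last first.
  rewrite big_pred0 // (@min_r _ _ 1 0) ?ler01 // mulr0.
  exact: mulr_ge0.
have [i Si imax] := @arg_maxnP _ i0 S (fun i : 'I_n => val i) Si0.
have sumS : \sum_(j | S j) p <= p * (i.+1)%:R.
  have -> : p * (i.+1)%:R = \sum_(j < n | (j < i.+1)%N) p.
    by rewrite -big_ord_widen ?ltn_ord // sumr_const card_ord mulr_natr.
  rewrite big_mkcond [leRHS]big_mkcond; apply: ler_sum => j _.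
  case: ifP => Sj; last by case: ifP.
  by rewrite ltnS; move: (imax j Sj) => /= ->.
apply: (@le_trans _ _ (a * Num.min 1 (p * (i.+1)%:R))).
  by rewrite ler_wpM2l // le_min !ge_min lexx /= sumS orbT.
by apply: le_trans (hprice i) _; rewrite ler_wpM2l ?hS.
Qed.

Section LowerBound.
Variables (R : realType) (T n : nat) (f : 'rV[R]_T -> R) (tau : 'I_n -> R)
  (p : R) (A : algorithm R T).
Local Notation O := (sync_oracle (Gmap f p) tau).
Local Notation V := {ffun 'I_n -> bool}.

Lemma sync_state_cases nu k :
  (history O A nu k).2 = ((0 : R), (0 : 'rV[R]_T), false) \/
  exists k', k = k'.+1 /\
    (history O A nu k).2 = (time O A nu k, iterate O A nu k', true).
Proof.
elim: k => [|k IH]; first by left.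
by rewrite state_step; case: IH => [-> | [k' [_ ->]]] /=; [right; exists k|left].
Qed.

Definition observed_prog nu k := \max_(g <- grads O A nu k) prog g.

Definition useful_round (s : ostate R T) (t1 : R) (b : 'I_n -> bool) : bool :=
  s.2 && [exists i, (s.1.1 + tau i <= t1) && b i].

Lemma observed_prog0 nu : observed_prog nu 0 = 0%N.
Proof. by rewrite /observed_prog /grads big_nil. Qed.

Lemma observed_prog_mono nu k : (observed_prog nu k <= observed_prog nu k.+1)%N.
Proof. by rewrite /observed_prog grads_step -cats1 big_cat leq_maxl. Qed.

Lemma observed_prog_agree nu nu' k :
  agree_upto nu nu' k -> observed_prog nu k = observed_prog nu' k.
Proof. by move=> /grads_agree; rewrite /observed_prog => ->. Qed.

Hypothesis hzr : zero_respecting O A.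

Lemma prog_iterate_le nu k : (prog (iterate O A nu k) <= observed_prog nu k)%N.
Proof.
apply/prog_leP => j xj; have [g /= gin gj] := hzr xj.
exact: leq_trans (prog_ge gj) (leq_bigmax_seq _ gin _).
Qed.

Hypothesis hprog : forall x, (prog (grad f x) <= (prog x).+1)%N.

Lemma observed_progS nu k :
  (observed_prog nu k.+1 <= observed_prog nu k +
     useful_round (history O A nu k).2 (time O A nu k.+1) (nu k))%N.
Proof.
rewrite {1}/observed_prog grads_step -cats1 big_cat big_seq1 /= geq_max leq_addr.
case: (sync_state_cases nu k) => [-> | [k' [ek ->]]] /=; first by rewrite prog0.
apply: leq_trans (prog_sum_Gmap _ _ _ (hprog _)) _; rewrite leq_add2r.
by apply: leq_trans (prog_iterate_le _ _) _; rewrite ek observed_prog_mono.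
Qed.

Hypothesis hA : valid_algorithm A.
Hypotheses (hp0 : 0 <= p) (hp1 : p <= 1).
Variables (beta L delta t : R).
Hypotheses (hbeta : 0 <= beta) (hL : 0 <= L) (hdelta : 0 < delta).
Hypothesis hrate : forall i : 'I_n,
  (expR beta - 1) * Num.min 1 (p * (i.+1)%:R) <= L * tau i.
(* A round with progress T by time t has potential at least 1 / delta. *)
Hypothesis hbudget : - ln delta <= beta * T%:R - L * t.

Definition potential nu k :=
  expR (beta * (observed_prog nu k)%:R - L * time O A nu k).

Definition bad nu k :=
  (time O A nu k <= t) && (T <= prog (iterate O A nu k))%N.

Fixpoint bad_by nu k :=
  if k is k'.+1 then bad_by nu k' || bad nu k'.+1 else bad nu 0.

Definition stopped_potential nu k :=
  if bad_by nu k then delta^-1 else potential nu k.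

Definition set_draw (nu : nat -> 'I_n -> bool) (k : nat) (v : V)
  : nat -> 'I_n -> bool :=
  fun j => if j == k then (fun i => v i) else nu j.

Lemma set_draw_agree nu k v : agree_upto (set_draw nu k v) nu k.
Proof. by move=> j i ltjk; rewrite /set_draw ltn_eqF. Qed.
Arguments set_draw_agree : clear implicits.

Lemma bad_agree nu nu' k : agree_upto nu nu' k -> bad nu k = bad nu' k.
Proof.
move=> agr; rewrite /bad (iterate_agree O A agr); case: k agr => [//|k] agr.
by rewrite (time_agree O A (agree_uptoW (leqnSn k) agr)).
Qed.

Lemma bad_by_agree nu nu' k : agree_upto nu nu' k -> bad_by nu k = bad_by nu' k.
Proof.
elim: k => [|k IH] agr /=; first exact: bad_agree.
by rewrite (bad_agree agr) IH //; apply: agree_uptoW agr.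
Qed.

Lemma stopped_potential_agree nu nu' k :
  agree_upto nu nu' k -> stopped_potential nu k = stopped_potential nu' k.
Proof.
move=> agr; rewrite /stopped_potential /potential (bad_by_agree agr).
rewrite (observed_prog_agree agr); case: k agr => [//|k] agr.
by rewrite (time_agree O A (agree_uptoW (leqnSn k) agr)).
Qed.

(* This is where the constraint hbudget enters. *)
Lemma bad_potential nu k : bad nu k -> delta^-1 <= potential nu k.
Proof.
move=> /andP [tk Tk].
have Tobs : (T <= observed_prog nu k)%N := leq_trans Tk (prog_iterate_le nu k).
rewrite -[delta^-1]lnK ?posrE ?invr_gt0 // lnV ?posrE // ler_expR.
apply: le_trans hbudget _; apply: lerB; rewrite ler_wpM2l //.
by rewrite ler_nat.
Qed.

Lemma potential_set_draw nu k v :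
  potential (set_draw nu k v) k.+1 <=
  expR (beta * (observed_prog nu k)%:R - L * time O A nu k.+1) *
  expR (beta * (useful_round (history O A nu k).2 (time O A nu k.+1) v)%:R).
Proof.
have agr := set_draw_agree nu k v; have := observed_progS (set_draw nu k v) k.
rewrite /potential (time_agree O A agr) (history_agree O A agr).
rewrite (observed_prog_agree agr).
rewrite /set_draw eqxx -(ler_nat R) natrD => /(ler_wpM2l hbeta) hstep.
by rewrite -expRD ler_expR; lra.
Qed.

Lemma expected_useful_round nu k :
  (expR beta - 1) * \sum_v draw_weight p v *
     (useful_round (history O A nu k).2 (time O A nu k.+1) v)%:R
  <= L * (time O A nu k.+1 - time O A nu k).
Proof.
have gain0 : 0 <= expR beta - 1.
  by rewrite subr_ge0; apply: le_trans (expR_ge1Dx beta); rewrite lerDl.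
have dt0 : 0 <= time O A nu k.+1 - time O A nu k by rewrite subr_ge0 time_mono.
case: (sync_state_cases nu k) => [-> | [k' [_ ->]]].
  by rewrite big1 ?mulr0 ?mulr_ge0 // => v _; rewrite /useful_round /= mulr0.
set S := fun i => time O A nu k + tau i <= time O A nu k.+1.
have finished i : S i -> tau i <= time O A nu k.+1 - time O A nu k.
  by rewrite /S lerBrDl addrC.
apply: le_trans (round_gain_le hp0 gain0 hL dt0 hrate finished).
by rewrite ler_wpM2l //; apply: prob_some_draw.
Qed.

Lemma potential_step nu k :
  \sum_v draw_weight p v * potential (set_draw nu k v) k.+1 <= potential nu k.
Proof.
set X := expR (beta * (observed_prog nu k)%:R - L * time O A nu k.+1).
set s := useful_round (history O A nu k).2 (time O A nu k.+1).
have bern v : expR (beta * (s v)%:R) = 1 + (s v)%:R * (expR beta - 1).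
  by case: (s v); rewrite ?mulr1 ?mulr0 ?expR0 ?mul1r ?mul0r ?addr0 // addrC subrK.
apply: (@le_trans _ _
    (\sum_v draw_weight p v * (X * (1 + (s v)%:R * (expR beta - 1))))).
  apply: ler_sum => v _; rewrite ler_wpM2l ?draw_weight_ge0 // -bern.
  exact: potential_set_draw.
have -> : \sum_(v : V) draw_weight p v * (X * (1 + (s v)%:R * (expR beta - 1))) =
    X * (\sum_(v : V) draw_weight p v +
         (expR beta - 1) * \sum_(v : V) draw_weight p v * (s v)%:R).
  rewrite mulr_sumr mulrDr !mulr_sumr -big_split /=.
  by apply: eq_bigr => v _; ring.
rewrite sum_draw_weight.
apply: (@le_trans _ _ (X * expR (L * (time O A nu k.+1 - time O A nu k)))).
  rewrite ler_wpM2l ?expR_ge0 //; apply: le_trans (expR_ge1Dx _).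
  by rewrite lerD2l; apply: expected_useful_round.
by rewrite /X /potential -expRD ler_expR; lra.
Qed.

(* So is the stopped potential: once stopped it stays at 1 / delta, and
   stopping only lowers it. *)
Lemma stopped_step nu k :
  \sum_v draw_weight p v * stopped_potential (set_draw nu k v) k.+1 <=
  stopped_potential nu k.
Proof.
have frozen v : bad_by (set_draw nu k v) k = bad_by nu k.
  exact: bad_by_agree (set_draw_agree nu k v).
rewrite {2}/stopped_potential; case: ifP => stopped.
  under eq_bigr => v _ do rewrite /stopped_potential /= frozen stopped /=.
  by rewrite -mulr_suml sum_draw_weight mul1r.
apply: le_trans (potential_step nu k); apply: ler_sum => v _.
rewrite ler_wpM2l ?draw_weight_ge0 // /stopped_potential /= frozen stopped /=.
by case: ifP => // /bad_potential.
Qed.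

Hypothesis hT : (0 < T)%N.

(* No progress has been made before the first answer. *)
Lemma stopped_potential0 nu : stopped_potential nu 0 = 1.
Proof.
have := prog_iterate_le nu 0; rewrite observed_prog0 leqn0 => /eqP prog0.
have T0 : (T <= 0)%N = false by lia.
rewrite /stopped_potential /= /bad prog0 T0 andbF.
by rewrite /potential observed_prog0 /time !mulr0 subr0 expR0.
Qed.

Lemma bad_by_le nu k : (bad_by nu k)%:R <= delta * stopped_potential nu k.
Proof.
rewrite /stopped_potential; case: ifP => _; first by rewrite mulfV ?gt_eqF.
by apply: mulr_ge0; [exact: ltW | exact: expR_ge0].
Qed.

Definition noise_of (h : seq V) : nat -> 'I_n -> bool :=
  fun k i => nth [ffun=> false] h k i.

Lemma noise_of_rcons h v :
  agree_upto (noise_of (rcons h v)) (set_draw (noise_of h) (size h) v)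
    (size h).+1.
Proof.
move=> j i; rewrite ltnS leq_eqVlt /noise_of /set_draw nth_rcons.
by case: ltngtP.
Qed.
Arguments noise_of_rcons : clear implicits.

Lemma expect_stopped_potential N :
  expect p N (fun h => stopped_potential (noise_of h) (size h)) <= 1.
Proof.
elim: N => [|N IH].
  by rewrite /expect big_seq1 /seq_weight big_nil mul1r stopped_potential0.
rewrite expectS; apply: le_trans IH; apply: (ler_expect hp0 hp1) => h.
under eq_bigr => v _ do rewrite size_rcons
  (stopped_potential_agree (noise_of_rcons h v)).
exact: stopped_step.
Qed.

(* Markov's inequality for the stopped potential. *)
Lemma expect_bad_by N :
  expect p N (fun h => (bad_by (noise_of h) (size h))%:R) <= delta.
Proof.
apply: le_trans (ler_expect hp0 hp1 _ (fun h => bad_by_le _ _)) _.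
by rewrite expectZ; apply: ler_piMr; [exact: ltW | exact: expect_stopped_potential].
Qed.

Lemma bad_byP nu N : reflect (exists2 j, (j <= N)%N & bad nu j) (bad_by nu N).
Proof.
elim: N => [|N IH] /=.
  by apply: (iffP idP) => [b0|[j]]; [exists 0%N | rewrite leqn0 => /eqP ->].
apply: (iffP orP) => [[/IH [j leN bj]|bN]|[j]].
- by exists j => //; apply: leqW.
- by exists N.+1.
rewrite leq_eqVlt ltnS => /orP [/eqP -> | leN] bj; first by right.
by left; apply/IH; exists j.
Qed.

Variables (d : measure_display) (Omega : measurableType d)
  (P : probability Omega R) (xi : Omega -> nat -> 'I_n -> bool).
Hypothesis hxi : iid_bernoulli_noise P p xi.

Definition cylinder (h : seq V) : set Omega :=
  [set w | agree_upto (xi w) (noise_of h) (size h)].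

Lemma cylinder_measurable h : measurable (cylinder h).
Proof.
have -> : cylinder h = \bigcap_(k in `I_(size h)) \bigcap_(i in [set: 'I_n])
                         [set w | xi w k i = noise_of h k i].
  apply/seteqP; split => w /= agr; first by move=> k ltk i _; apply: agr.
  by move=> k i ltk; apply: agr.
apply: fin_bigcap_measurable => [|k _]; first exact: finite_II.
apply: fin_bigcap_measurable => [|i _]; first exact: finite_finset.
case: (noise_of h k i); first exact: hxi.1.
rewrite (_ : [set w | xi w k i = false] = ~` [set w | xi w k i]).
  exact/measurableC/hxi.1.
by apply/seteqP; split => w /=; case: (xi w k i).
Qed.

Lemma prob_cylinder h : P (cylinder h) = (seq_weight p h)%:E.
Proof.
rewrite /cylinder (hxi.2 (size h) (noise_of h)) /seq_weight.
by rewrite (big_nth [ffun=> false]) big_mkord.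
Qed.

(* Having been bad within N rounds depends on the first N draws only, so the
   event is a finite union of cylinders. *)
Definition bad_event N : set Omega := [set w | bad_by (xi w) N].

Lemma bad_event_cylinders N :
  bad_event N =
  \big[setU/set0]_(h <- draw_seqs n N | bad_by (noise_of h) N) cylinder h.
Proof.
rewrite -bigcup_seq_cond; apply/seteqP; split => w /=.
  move=> bad; set h := [seq [ffun i => xi w k i] | k <- iota 0 N].
  have sizeh : size h = N by rewrite size_map size_iota.
  have agr : agree_upto (xi w) (noise_of h) N.
    move=> k i ltk; rewrite /noise_of (nth_map 0) ?size_iota //.
    by rewrite nth_iota // ffunE.
  exists h; last by rewrite /cylinder /= sizeh.
  by rewrite /= -(bad_by_agree agr) bad andbT -{1}sizeh mem_draw_seqs.
case=> h /andP [hN badh]; rewrite /cylinder /= (size_draw_seqs hN) => agr.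
by rewrite /bad_event /= (bad_by_agree agr).
Qed.

Lemma bad_event_measurable N : measurable (bad_event N).
Proof.
by rewrite bad_event_cylinders; apply: bigsetU_measurable => h _;
  apply: cylinder_measurable.
Qed.

(* Union bound over the cylinders, then Markov's inequality. *)
Lemma prob_bad_event N : (P (bad_event N) <= delta%:E)%E.
Proof.
rewrite bad_event_cylinders.
apply: le_trans (measure_bigsetU_seq_le _ _ _ cylinder_measurable) _.
rewrite (eq_bigr (fun h => (seq_weight p h)%:E)) => [|h _]; last first.
  exact: prob_cylinder.
rewrite sumEFin lee_fin; apply: le_trans (expect_bad_by N).
rewrite /expect big_mkcond /= big_seq [leRHS]big_seq; apply: ler_sum => h hN.
by rewrite (size_draw_seqs hN); case: bad_by; rewrite ?mulr1 ?mulr0.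
Qed.

Lemma no_early_progress :
  ((1 - delta)%:E <= P [set w | forall k : nat,
     (time O A (xi w) k <= t)%R -> (prog (iterate O A (xi w) k) < T)%N])%E.
Proof.
have mU : measurable (\bigcup_N bad_event N).
  by apply: bigcupT_measurable => N; apply: bad_event_measurable.
have incr : nondecreasing_seq bad_event.
  apply/nondecreasing_seqP => N; rewrite subsetEset => w.
  by rewrite /bad_event /= => ->.
have PU : (P (\bigcup_N bad_event N) <= delta%:E)%E.
  apply: cvge_to_le (nondecreasing_cvg_mu bad_event_measurable mU incr) _.
  by apply: nearW => N; apply: prob_bad_event.
have -> : [set w | forall k : nat, (time O A (xi w) k <= t)%R ->
            (prog (iterate O A (xi w) k) < T)%N] = ~` \bigcup_N bad_event N.
  apply/seteqP; split => w /=.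
    move=> good [N _ /bad_byP [j _ /andP [tj Tj]]].
    by have := good j tj; rewrite ltnNge Tj.
  move=> notbad k tk; rewrite ltnNge; apply/negP => Tk; apply: notbad.
  by exists k => //; apply/bad_byP; exists k; rewrite // /bad tk.
by rewrite probability_setC // EFinB; apply: leeB.
Qed.

End LowerBound.

(* exp(1/2) <= 2, because exp(-1/2) >= 1 - 1/2. *)
Lemma expR_half_le2 (R : realType) : expR (2^-1 : R) <= 2.
Proof.
have hinv := expR_ge1Dx (- 2^-1 : R).
have pos := expR_gt0 (2^-1 : R).
have := expRxMexpNx_1 (2^-1 : R); nra.
Qed.

Lemma min_rate_factor_le2 (R : realFieldType) (x : R) :
  0 < x -> Num.min 1 x * (1 + (4 * x)^-1) <= 2.
Proof.
move=> x0; have m1 : Num.min 1 x <= 1 by rewrite ge_min lexx.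
have mx : Num.min 1 x <= x by rewrite ge_min lexx orbT.
have y0 : 0 <= (4 * x)^-1 by rewrite invr_ge0 mulr_ge0 // ltW.
have xy : x * (4 * x)^-1 = 4^-1 by rewrite invfM mulrCA mulfV ?mulr1 ?gt_eqF.
have := ler_wpM2r y0 mx; lra.
Qed.

(* With at least one worker, beta = 1/2 and L = max_i 2 / (tau_i K_i), where
   K_i = 1 + 1/(4 p (i+1)), satisfy both constraints of the potential as soon
   as t <= tau_i K_i (T/2 + ln delta) / 2 for every i. *)
Lemma half_rate_parameters (R : realType) (T n : nat) (tau : 'I_n -> R)
    (p delta t : R) :
  (0 < n)%N -> (forall i, 0 < tau i) -> 0 < p -> 0 <= t ->
  (forall m : 'I_n, t <= 2^-1 * (tau m * (1 + (4 * p * (m.+1)%:R)^-1)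
                                 * (T%:R / 2 + ln delta))) ->
  exists2 L : R, 0 <= L &
    (forall i : 'I_n, (expR 2^-1 - 1) * Num.min 1 (p * (i.+1)%:R) <= L * tau i)
    /\ - ln delta <= 2^-1 * T%:R - L * t.
Proof.
move=> npos htau hp ht0 ht.
set X := T%:R / 2 + ln delta.
pose D i := tau i * (1 + (4 * p * (i.+1)%:R)^-1).
have Dpos i : 0 < D i.
  by rewrite mulr_gt0 ?ltr_wpDr ?invr_ge0 ?mulr_ge0 ?ltW.
pose c i := 2 / D i.
have ct i : c i * t <= X.
  have := ht i; rewrite -/(D i) -/X => hti.
  by rewrite /c mulrAC ler_pdivrMr //; lra.
have X0 : 0 <= X.
  by apply: le_trans _ (ct (Ordinal npos)); rewrite mulr_ge0 // divr_ge0 // ltW.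
exists (\big[Num.max/0]_(i < n) c i); first exact: bigmax_ge_id.
split=> [i|].
  set m := Num.min 1 (p * (i.+1)%:R).
  have m0 : 0 <= m by rewrite le_min ler01 mulr_ge0 ?ltW.
  have mD : m * D i <= 2 * tau i.
    have := min_rate_factor_le2 (mulr_gt0 hp (ltr0Sn _ i)); rewrite mulrA => mK.
    by rewrite /D mulrCA [2 * _]mulrC; apply: ler_wpM2l; [exact: ltW | exact: mK].
  have mc : m <= c i * tau i by rewrite /c mulrAC ler_pdivlMr.
  have cL : c i * tau i <= (\big[Num.max/0]_(i < n) c i) * tau i.
    by rewrite ler_wpM2r ?(ltW (htau i)) //; apply: le_bigmax.
  by have := expR_half_le2 R; nra.
suff : \big[Num.max/0]_(i < n) c i * t <= X by rewrite /X; lra.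
have [->|tpos] := eqVneq t 0; first by rewrite mulr0.
have tp : 0 < t by rewrite lt_neqAle eq_sym tpos.
rewrite -ler_pdivlMr //; apply: bigmax_le => [|i _]; first exact: divr_ge0.
by rewrite ler_pdivlMr.
Qed.

(* Parameters satisfying both constraints of the potential.  Without
   workers the rate constraint is vacuous, and beta = -ln delta, L = 0 meet
   the budget constraint since T >= 1. *)
Lemma admissible_parameters (R : realType) (T n : nat) (tau : 'I_n -> R)
    (p delta t : R) :
  (0 < T)%N -> (forall i, 0 < tau i) -> 0 < p -> 0 < delta -> delta <= 1 ->
  0 <= t ->
  (forall m : 'I_n, t <= 2^-1 * (tau m * (1 + (4 * p * (m.+1)%:R)^-1)
                                 * (T%:R / 2 + ln delta))) ->
  exists beta L : R, [/\ 0 <= beta, 0 <= L,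
    forall i : 'I_n, (expR beta - 1) * Num.min 1 (p * (i.+1)%:R) <= L * tau i
    & - ln delta <= beta * T%:R - L * t].
Proof.
move=> hT htau hp hd0 hd1 ht0 ht; have [n0|npos] := posnP n.
  have lnd : 0 <= - ln delta by rewrite oppr_ge0 ln_le0.
  exists (- ln delta), 0; split=> // [i|]; first by subst n; case: i.
  by rewrite mul0r subr0 ler_peMr // ler1n.
have [L hL [hrate hbudget]] := half_rate_parameters npos htau hp ht0 ht.
by exists 2^-1, L; split; rewrite ?invr_ge0 ?ler0n.
Qed.

Theorem mainTheorem16 (R : realType) (T n : nat) (hT : (0 < T)%N)
  (f : 'rV[R]_T -> R)
  (hdiff : forall x, differentiable f x)
  (hprog : forall x, (prog (grad f x) <= (prog x).+1)%N)
  (tau : 'I_n -> R)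
  (htau_pos : forall i, 0 < tau i)
  (htau_mono : forall i j : 'I_n, (i <= j)%N -> tau i <= tau j)
  (p : R) (hp0 : 0 < p) (hp1 : p <= 1)
  (d : measure_display) (Omega : measurableType d) (P : probability Omega R)
  (xi : Omega -> nat -> 'I_n -> bool)
  (hxi : iid_bernoulli_noise P p xi)
  (A : algorithm R T)
  (hA : valid_algorithm A)
  (hzr : zero_respecting (sync_oracle (Gmap f p) tau) A)
  (delta : R) (hd0 : 0 < delta) (hd1 : delta <= 1)
  (t : R) (ht0 : 0 <= t)
  (ht : forall m : 'I_n,
     t <= 2^-1 * (tau m * (1 + (4 * p * (m.+1)%:R)^-1)
                  * (T%:R / 2 + ln delta))) :
  ((1 - delta)%:E <=
  P [set w | forall k : nat,
       (time (sync_oracle (Gmap f p) tau) A (xi w) k <= t)%R ->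
       (prog (iterate (sync_oracle (Gmap f p) tau) A (xi w) k) < T)%N])%E.
Proof.
have [beta [L [hbeta hL hrate hbudget]]] :=
  admissible_parameters hT htau_pos hp0 hd0 hd1 ht0 ht.
exact: (no_early_progress hzr hprog hA (ltW hp0) hp1 hbeta hL hd0 hrate hbudget
  hT hxi).
Qed.
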